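(* (Extended Lucas Theorem.) Let $n$ be a prime, let $m \geq n$ be an integer and let $k$ be an integer with $0 \leq k \leq m$. Write $m=\sum_{i=0}^r m_i n^i$ and $k=\sum_{i=0}^r k_i n^i$ in base $n$, where $r$ is a suitable nonnegative integer and $0 \leq m_i < n$, $0 \leq k_i < n$ are integers for each $i=0,1,\dots,r$. For each $i$ set $t_i=\min\{k_i,\, m_i-k_i\}$ and define \[ \binom{m_i}{t_i}_n := \begin{cases} (-1)^{t_i} \binom{n-1-m_i+t_i}{n-1-m_i} , & \text{if } m_i+t_i > n- 1,\\ (-1)^{t_i} \binom{n-1-m_i+t_i}{t_i}, & \text{if } m_i+t_i \leq n- 1 \text{ and } 2 m_i > n-1 +t_i,\\ \binom{m_i}{t_i}, & \text{otherwise}. \end{cases} \] Then \[ \binom{m}{k} \equiv \binom{m_r}{t_r}_n \binom{m-m_r n^r}{k-k_r n^r} \pmod{n}, \] and moreover \[ \binom{m}{k} \equiv \binom{m_r}{t_r}_n \binom{m_{r-1}}{t_{r-1}}_n \cdots \binom{m_1}{t_1}_n \binom{m_0}{t_0}_n \pmod{n}. \]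
   Context: Binomial coefficients $\binom{a}{b}$ with integer $a\ge 0$ follow the usual convention that $\binom{a}{b}=0$ if $b<0$ or $b>a$. *)

From mathcomp Require Import all_boot all_order all_algebra.
Set Implicit Arguments. Unset Strict Implicit. Unset Printing Implicit Defensive.
Import Order.TTheory GRing.Theory Num.Theory.
Local Open Scope ring_scope.

Definition binZ (a b : int) : int :=
  if (0 <= a) && (0 <= b) then ('C(`|a|%N, `|b|%N))%:Z else 0.

Definition genbin (n mi ki : nat) : int :=
  let t : int := Num.min (ki%:Z) (mi%:Z - ki%:Z) in
  let N1 : int := (n%:Z - 1) in
  if (mi%:Z + t > N1) then (-1) ^+ `|t|%N * binZ (N1 - mi%:Z + t) (N1 - mi%:Z)
  else if (2 * mi%:Z > N1 + t) then (-1) ^+ `|t|%N * binZ (N1 - mi%:Z + t) t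
  else binZ (mi%:Z) t.

(* The congruences follow from Lucas' theorem, 'C(m, k) = \prod_i 'C(m_i, k_i) (mod n), itself
   obtained digit by digit from 'C(n + N, K) = 'C(N, K) + 'C(N, K - n) (mod n), i.e. from
   (1 + X)^n = 1 + X^n over F_n.  It remains to see that each generalized binomial is congruent
   to 'C(m_i, k_i): when k_i <= m_i it is either 'C(m_i, t_i) = 'C(m_i, k_i) or, up to symmetry
   of binomials, (-1)^t_i 'C(n - 1 - m_i + t_i, t_i), which is congruent to 'C(m_i, t_i) by upper
   negation since n - 1 - m_i = -1 - m_i (mod n); when k_i > m_i it is 0, because t_i < 0. *)
From mathcomp Require Import all_boot all_order all_algebra zify ring.
Set Implicit Arguments. Unset Strict Implicit. Unset Printing Implicit Defensive.
Import Order.TTheory GRing.Theory Num.Theory.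

Lemma bin_prime_mod p j : prime p -> 'C(p, j) = (j == 0) + (j == p) %[mod p].
Proof.
move=> p_pr; case: j => [|j]; first by rewrite bin0 eq_sym (gtn_eqF (prime_gt0 p_pr)).
case: (ltngtP j.+1 p) => [lt_jp | lt_pj | eq_jp]; last by rewrite -eq_jp binn.
- by rewrite (eqP (prime_dvd_bin p_pr _)) ?lt_jp ?mod0n // (gtn_eqF lt_jp).
- by rewrite bin_small // (ltn_eqF lt_pj).
Qed.

Lemma sum_nat_eq_mul (F : nat -> nat) (a n : nat) :
  \sum_(j < n) (j == a :> nat) * F j = (a < n) * F a.
Proof.
transitivity (\sum_(j < n | j == a :> nat) F j).
  by rewrite [RHS]big_mkcond; apply: eq_bigr => j _; case: (_ == _); rewrite ?mul1n ?mul0n.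
by rewrite big_ord1_eq; case: (a < n); rewrite ?mul1n.
Qed.

Lemma bin_addp_mod p N K : prime p ->
  'C(p + N, K) = 'C(N, K) + (p <= K) * 'C(N, K - p) %[mod p].
Proof.
move=> p_pr; rewrite -binomial.Vandermonde -modn_summ.
under eq_bigr do rewrite -modnMml bin_prime_mod // modnMml mulnDl.
rewrite modn_summ big_split /= !(sum_nat_eq_mul (fun j => 'C(N, K - j))).
by rewrite subn0 mul1n.
Qed.

Lemma lucas_digit p a b c d : prime p -> c < p -> d < p ->
  'C(a * p + c, b * p + d) = 'C(a, b) * 'C(c, d) %[mod p].
Proof.
move=> p_pr lt_cp lt_dp; elim: a b => [|a IHa] b.
  case: b => [|b]; first by rewrite !mul0n !add0n bin0 mul1n.
  by rewrite bin_small ?bin0n // mulSn -addnA (leq_trans lt_cp) ?leq_addr.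
rewrite mulSn -addnA bin_addp_mod //.
case: b => [|b].
  by rewrite mul0n add0n leqNgt lt_dp mul0n addn0 -[d]add0n -(mul0n p) IHa !bin0.
rewrite mulSn -addnA leq_addr mul1n addKn addnA -mulSn -modnDm !IHa modnDm.
by rewrite binS mulnDl.
Qed.

Lemma lucas p (md kd : nat -> nat) r : prime p ->
  (forall i, i < r -> md i < p) -> (forall i, i < r -> kd i < p) ->
  'C(\sum_(i < r) md i * p ^ i, \sum_(i < r) kd i * p ^ i)
    = \prod_(i < r) 'C(md i, kd i) %[mod p].
Proof.
move=> p_pr; elim: r md kd => [|r IHr] md kd md_lt kd_lt; first by rewrite !big_ord0.
have digitsE (xd : nat -> nat) :
    \sum_(i < r.+1) xd i * p ^ i = (\sum_(i < r) xd i.+1 * p ^ i) * p + xd 0.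
  rewrite big_ord_recl big_distrl /= [RHS]addnC expn0 muln1; congr (_ + _).
  by apply: eq_bigr => i _; rewrite expnSr mulnA.
rewrite !digitsE big_ord_recl lucas_digit ?md_lt ?kd_lt // mulnC -modnMmr.
rewrite (IHr (fun i => md i.+1) (fun i => kd i.+1)) ?modnMmr // => i lt_ir.
- exact: md_lt.
- exact: kd_lt.
Qed.

Local Open Scope ring_scope.

Lemma congr_modz_nat (a b d : nat) : (a = b %[mod d])%N -> (a%:Z = b%:Z %[mod d%:Z])%Z.
Proof. by rewrite !modz_nat => ->. Qed.

Lemma binZ_nat (a b : nat) : binZ a b = ('C(a, b))%:Z.
Proof. by []. Qed.

Lemma binZ_neg (a b : int) : b < 0 -> binZ a b = 0.
Proof. by move=> b_lt0; rewrite /binZ (leNgt 0 b) b_lt0 andbF. Qed.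

Lemma bin_upper_negation_mod p mi t : prime p -> (mi < p)%N -> (t < p)%N ->
  ((-1) ^+ t * ('C(p.-1 - mi + t, t))%:Z = ('C(mi, t))%:Z %[mod p%:Z])%Z.
Proof.
move=> p_pr; elim: mi t => [|mi IHmi] [|t] lt_mp lt_tp; rewrite ?expr0 ?mul1r ?bin0 //.
  have bin_p_t : ('C(p + t, t.+1) = 0 %[mod p])%N.
    by rewrite bin_addp_mod // leqNgt lt_tp bin_small.
  have -> : (p.-1 - 0 + t.+1 = p + t)%N by lia.
  by rewrite bin0n -modzMmr (congr_modz_nat bin_p_t) mod0z mulr0 mod0z.
have -> : (p.-1 - mi.+1 + t.+1 = p.-1 - mi + t)%N by lia.
have IHt := IHmi t (ltnW lt_mp) (ltnW lt_tp).
have := IHmi t.+1 (ltnW lt_mp) lt_tp.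
rewrite (_ : p.-1 - mi + t.+1 = (p.-1 - mi + t).+1)%N; last by lia.
rewrite binS [in X in _ -> X]binS !PoszD -modzDm -IHt => <-.
by rewrite modzDm exprS; congr (_ %% _)%Z; ring.
Qed.

Lemma genbin_mod p mi ki : prime p -> (mi < p)%N -> (ki < p)%N ->
  (genbin p mi ki = ('C(mi, ki))%:Z %[mod p%:Z])%Z.
Proof.
move=> p_pr lt_mp lt_kp; rewrite /genbin.
have [lt_mk | le_km] := ltnP mi ki.
  have -> : Num.min ki%:Z (mi%:Z - ki%:Z) = mi%:Z - ki%:Z.
    by rewrite minEle; case: leP => ?; lia.
  have -> : (mi%:Z + (mi%:Z - ki%:Z) > p%:Z - 1) = false by apply/negbTE; lia.
  by rewrite bin_small // !binZ_neg ?mulr0 ?if_same //; lia.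
pose t := minn ki (mi - ki).
have -> : Num.min ki%:Z (mi%:Z - ki%:Z) = t by rewrite /t minEle; case: leP => ?; lia.
have bin_t : 'C(mi, ki) = 'C(mi, t).
  by rewrite /t /minn; case: ltnP => // _; rewrite bin_sub.
have lt_tp : (t < p)%N by apply: leq_ltn_trans (geq_minl _ _) lt_kp.
have -> : p%:Z - 1 - mi%:Z + t = (p.-1 - mi + t)%N by lia.
have -> : p%:Z - 1 - mi%:Z = (p.-1 - mi)%N by lia.
have upper_negation := bin_upper_negation_mod p_pr lt_mp lt_tp.
rewrite bin_t !binZ_nat absz_nat; case: ifP => _; last by case: ifP.
by rewrite -[X in 'C(_, X)](addnK t) bin_sub ?leq_addl.
Qed.

Lemma prod_genbin_mod p (md kd : nat -> nat) r : prime p ->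
  (forall i, (i < r)%N -> (md i < p)%N) -> (forall i, (i < r)%N -> (kd i < p)%N) ->
  (\prod_(i < r) genbin p (md i) (kd i)
     = (\prod_(i < r) 'C(md i, kd i))%N%:Z %[mod p%:Z])%Z.
Proof.
move=> p_pr; elim: r => [|r IHr] md_lt kd_lt; first by rewrite !big_ord0.
rewrite !big_ord_recr /= PoszM -modzMml IHr => [|i /ltnW/md_lt|i /ltnW/kd_lt] //.
by rewrite modzMml -modzMmr genbin_mod ?md_lt ?kd_lt ?modzMmr.
Qed.

Local Close Scope ring_scope.

Theorem theorem1p2 (n m k r : nat) (md kd : nat -> nat) :
  prime n -> n <= m -> k <= m ->
  (forall i, (i <= r)%N -> md i < n) ->
  (forall i, (i <= r)%N -> kd i < n) ->
  m = \sum_(i < r.+1) md i * n ^ i ->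
  k = \sum_(i < r.+1) kd i * n ^ i ->
  (('C(m, k))%:Z = genbin n (md r) (kd r)
        * ('C(m - md r * n ^ r, k - kd r * n ^ r))%:Z %[mod n%:Z])%Z /\
  (('C(m, k))%:Z = \prod_(i < r.+1) genbin n (md i) (kd i) %[mod n%:Z])%Z.
Proof.
move=> n_pr _ _ md_le kd_le m_digits k_digits.
have md_lt i : (i < r.+1)%N -> (md i < n)%N by rewrite ltnS; apply: md_le.
have kd_lt i : (i < r.+1)%N -> (kd i < n)%N by rewrite ltnS; apply: kd_le.
have lucas_m := lucas n_pr md_lt kd_lt; rewrite -m_digits -k_digits in lucas_m.
have lucas_low : ('C(m - md r * n ^ r, k - kd r * n ^ r)
                    = \prod_(i < r) 'C(md i, kd i) %[mod n])%N.
  rewrite m_digits k_digits !big_ord_recr /= !addnK.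
  by apply: lucas => // i /ltnW; [apply: md_lt | apply: kd_lt].
rewrite (congr_modz_nat lucas_m) prod_genbin_mod //; split=> //.
rewrite big_ord_recr /= PoszM mulrC -modzMmr (congr_modz_nat lucas_low) modzMmr.
by rewrite -[RHS]modzMml genbin_mod ?md_le ?kd_le ?modzMml.
Qed.
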